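(* For every integer $k\ge1$, the number of $1$-factorisations of $GP(3k,k)$ equals $t_k(1)+3h_k(2)$.
   Context: $GP(3k,k)$ has vertex set $\{u_i,v_i : i\in\mathbb{Z}_{3k}\}$ and edges $u_iu_{i+1}$, $u_iv_i$, $v_iv_{i+k}$ for $i\in\mathbb{Z}_{3k}$. A $1$-factorisation is a partition of the edge set into perfect matchings (unordered). Let $T$ be a triangle (cycle of length $3$) and $H$ a cycle of length $6$. For $\ell\ge0$, $t_k(\ell)$ denotes the number of walks of length $k$ from $x$ to $y$ in $T$, where $x,y$ are vertices of $T$ at distance $\ell$, and $h_k(\ell)$ denotes the number of walks of length $k$ from $x$ to $y$ in $H$, where $x,y$ are vertices of $H$ at distance $\ell$ (these numbers depend only on $\ell$). *)

From mathcomp Require Import all_boot.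
Set Implicit Arguments.
Unset Strict Implicit.
Unset Printing Implicit Defensive.

(* Vertex (false, i) is u_i, vertex (true, i) is v_i, i in Z_{3k}. *)
Definition gp_vertex (k : nat) := (bool * 'I_(3 * k))%type.

Definition gp_adj (k : nat) (x y : gp_vertex k) : bool :=
  let n := 3 * k in
  match x, y with
  | (false, i), (false, j) => (j == (i + 1) %% n :> nat) || (i == (j + 1) %% n :> nat)
  | (true, i), (true, j) => (j == (i + k) %% n :> nat) || (i == (j + k) %% n :> nat)
  | (false, i), (true, j) => i == j
  | (true, i), (false, j) => i == j
  end.

Definition gp_edges (k : nat) : {set {set gp_vertex k}} :=
  [set e : {set gp_vertex k} | [exists x, exists y, (e == [set x; y]) && gp_adj x y]].

Definition perfect_matching (k : nat) (M : {set {set gp_vertex k}}) : bool :=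
  (M \subset gp_edges k) &&
  [forall v : gp_vertex k, #|[set e in M | v \in e]| == 1].

Definition one_factorisation (k : nat) (F : {set {set {set gp_vertex k}}}) : bool :=
  partition F (gp_edges k) && [forall M in F, perfect_matching M].

Definition num_one_factorisations (k : nat) : nat :=
  #|[set F : {set {set {set gp_vertex k}}} | one_factorisation F]|.

Definition cyc_adj (n : nat) (i j : 'I_n) : bool :=
  (j == (i + 1) %% n :> nat) || (i == (j + 1) %% n :> nat).

Definition cyc_walks (n len : nat) (x y : 'I_n) : nat :=
  #|[set w : {ffun 'I_len.+1 -> 'I_n} |
      [&& w ord0 == x, w ord_max == y &
          [forall t : 'I_len, cyc_adj (w (widen_ord (leqnSn len) t)) (w (lift ord0 t))]]]|.

(* t_k(l): walks of length k in the triangle T = C_3 between vertices at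
   distance l (here vertices 0 and l, l <= 1). *)
Definition t_walks (k l : nat) : nat := cyc_walks k (@inord 2 0) (@inord 2 l).
(* h_k(l): walks of length k in the hexagon H = C_6 between vertices at
   distance l (here vertices 0 and l, l <= 3). *)
Definition h_walks (k l : nat) : nat := cyc_walks k (@inord 5 0) (@inord 5 l).

From mathcomp Require Import all_boot zify.
Set Implicit Arguments. Unset Strict Implicit. Unset Printing Implicit Defensive.

(* A 1-factorisation of the cubic graph GP(3k,k) is a proper 3-edge-colouring up
   to a permutation of the colours, fixed by prescribing the colours of the three
   edges at u_1.  Such a colouring is determined by the colours o of the rim edges
   u_i u_(i+1): a spoke gets the colour missing at its rim vertex and an inner edge
   v_i v_(i+k) the colour of the spoke at v_(i-k); the constraints are that
   consecutive rim edges differ and that the spokes at i, i+k, i+2k have three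
   distinct colours.  Reading the rim along the three strands j, j+k, j+2k turns o
   into a walk of length k in a transfer graph on the 27 triples of colours, closed
   up to a cyclic rotation of the triple.  The transfer graph, the triangle and the
   hexagon have their spectra in {0, 1, -1, 2, -2}, so both sides of the identity
   obey the recurrence a(k+6) - 5 a(k+4) + 4 a(k+2) = 0 (checked by computation on
   the adjacency relations), and they agree for k = 1, ..., 6. *)

(** * Walks in a finite graph *)

Section Walks.
Variables (T : finType) (r : rel T).

Definition walk_step len (w : {ffun 'I_len.+1 -> T}) :=
  [forall t : 'I_len, r (w (widen_ord (leqnSn len) t)) (w (lift ord0 t))].

Definition walkset len x y : {set {ffun 'I_len.+1 -> T}} :=
  [set w : {ffun 'I_len.+1 -> T} | [&& w ord0 == x, w ord_max == y & walk_step w]].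

Definition walks len x y := #|walkset len x y|.

Lemma walks0 x y : walks 0 x y = (x == y).
Proof.
rewrite /walks; case: eqP => [<-|nxy].
  rewrite (_ : walkset 0 x x = [set [ffun _ => x]]) ?cards1 //.
  apply/setP => w; rewrite !inE.
  apply/andP/eqP => [[/eqP w0 /andP[/eqP wm _]]|->]; last first.
    by rewrite !ffunE eqxx /=; split=> //; apply/forallP => [[]].
  by apply/ffunP => i; rewrite ffunE (ord1 i).
apply/eqP; rewrite cards_eq0; apply/eqP/setP => w; rewrite !inE.
apply/negP => /and3P[/eqP w0 /eqP wm _]; apply: nxy.
by rewrite -w0 -wm; congr (w _); apply: val_inj.
Qed.

Definition walk_cons len x (w : {ffun 'I_len.+1 -> T}) : {ffun 'I_len.+2 -> T} :=
  [ffun i => if unlift ord0 i is Some j then w j else x].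

Definition walk_behead len (w : {ffun 'I_len.+2 -> T}) : {ffun 'I_len.+1 -> T} :=
  [ffun j => w (lift ord0 j)].

Lemma walk_consK len x : cancel (@walk_cons len x) (@walk_behead len).
Proof. by move=> w; apply/ffunP => j; rewrite !ffunE liftK. Qed.

Lemma walk_beheadK len x (w : {ffun 'I_len.+2 -> T}) :
  w ord0 = x -> walk_cons x (walk_behead w) = w.
Proof.
move=> w0; apply/ffunP => i; rewrite !ffunE.
by case: unliftP => [j ->|->]; rewrite ?ffunE.
Qed.

Lemma walkset_second len x y z :
  [set w in walkset len.+1 x y | w (lift ord0 ord0) == z] =
  if r x z then walk_cons x @: walkset len z y else set0.
Proof.
have widen_lift (t : 'I_len) :
    widen_ord (leqnSn len.+1) (lift ord0 t) = lift ord0 (widen_ord (leqnSn len) t).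
  exact: val_inj.
have widen0 : widen_ord (leqnSn len.+1) ord0 = ord0 by apply: val_inj.
apply/setP => w; rewrite !inE; apply/idP/idP.
  case/andP => /and3P[/eqP w0 /eqP wm /forallP st] /eqP w1.
  have rxz : r x z by have := st ord0; rewrite -w0 -w1 widen0.
  rewrite rxz; apply/imsetP; exists (walk_behead w); last by rewrite walk_beheadK.
  rewrite inE !ffunE; apply/and3P; split.
  - by rewrite -w1; apply/eqP; congr (w _); apply: val_inj.
  - by rewrite -wm; apply/eqP; congr (w _); apply: val_inj.
  apply/forallP => t; rewrite !ffunE.
  by have := st (lift ord0 t); rewrite widen_lift.
case: ifP => rxz; last by rewrite inE.
case/imsetP => w' /[!inE] /and3P[/eqP w0 /eqP wm /forallP st] ->.
rewrite !ffunE /= !liftK; apply/andP; split; last by rewrite w0.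
apply/and3P; split.
- by rewrite unlift_none.
- have -> : (@ord_max len.+1) = lift ord0 ord_max by apply: val_inj.
  by rewrite liftK wm.
apply/forallP => t; rewrite !ffunE.
case: (unliftP ord0 t) => [j ->|->]; first by rewrite widen_lift !liftK; apply: st.
by rewrite liftK widen0 unlift_none w0.
Qed.

Lemma card_walkset_second len x y z :
  #|[set w in walkset len.+1 x y | w (lift ord0 ord0) == z]| = r x z * walks len z y.
Proof.
rewrite walkset_second; case: (r x z); last by rewrite cards0.
by rewrite mul1n card_imset //; apply: can_inj (walk_consK x).
Qed.

Lemma walksS len x y : walks len.+1 x y = \sum_z r x z * walks len z y.
Proof.
rewrite /walks -sum1_card.
rewrite (partition_big (fun w : {ffun 'I_len.+2 -> T} => w (lift ord0 ord0)) xpredT) //=.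
apply: eq_bigr => z _; rewrite -card_walkset_second -sum1_card.
by apply: eq_bigl => w; rewrite !inE.
Qed.

Definition walks_rec l :=
  forall a b, walks (l + 4) a b + 4 * walks l a b = 5 * walks (l + 2) a b.

Lemma walks_recS l : walks_rec l -> walks_rec l.+1.
Proof.
move=> H a b; rewrite !addSn !walksS !big_distrr -big_split /=.
by apply: eq_bigr => z _; rewrite mulnCA (mulnCA 5) -mulnDr H.
Qed.

Lemma walks_rec_from l0 l : walks_rec l0 -> l0 <= l -> walks_rec l.
Proof.
move=> H; elim: l => [|l IH]; first by rewrite leqn0 => /eqP <-.
by rewrite leq_eqVlt ltnS => /orP[/eqP <- //|/IH]; apply: walks_recS.
Qed.

End Walks.

(** * Walks in the triangle, the hexagon and the transfer graph *)

Lemma sum_ord_sumn m (F : nat -> nat) :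
  \sum_(i < m) F i = sumn [seq F i | i <- iota 0 m].
Proof. by rewrite sumnE big_map -(big_mkord xpredT) /index_iota subn0. Qed.

Section WalkVectors.
Variables (m : nat) (rn : nat -> nat -> bool).
Local Notation r := (fun x y : 'I_m => rn x y).

Definition walk_vec_step (v : seq nat) : seq nat :=
  [seq sumn [seq rn a z * nth 0 v z | z <- iota 0 m] | a <- iota 0 m].

Definition walk_vec b l :=
  iter l walk_vec_step [seq nat_of_bool (a == b) | a <- iota 0 m].

Lemma walks_vec l (a b : 'I_m) : walks r l a b = nth 0 (walk_vec b l) a.
Proof.
elim: l a => [|l IH] a.
  by rewrite walks0 (nth_map 0) ?size_iota // nth_iota.
rewrite walksS /walk_vec iterS -/(walk_vec b l) (nth_map 0) ?size_iota //.
by rewrite nth_iota // add0n -sum_ord_sumn; apply: eq_bigr => z _; rewrite IH.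
Qed.

Definition walks_rec_check l0 :=
  all (fun b => let v0 := walk_vec b l0 in let v2 := walk_vec b (l0 + 2) in
                let v4 := walk_vec b (l0 + 4) in
     all (fun a => nth 0 v4 a + 4 * nth 0 v0 a == 5 * nth 0 v2 a) (iota 0 m)) (iota 0 m).

Lemma walks_rec_checkP l0 l : walks_rec_check l0 -> l0 <= l -> walks_rec r l.
Proof.
move=> /allP check; apply: walks_rec_from => a b; rewrite !walks_vec; apply/eqP.
have mem_ord (i : 'I_m) : (i : nat) \in iota 0 m by rewrite mem_iota ltn_ord.
by have /allP := check b (mem_ord b); apply; apply: mem_ord.
Qed.

End WalkVectors.

Definition cyc_adjn n (i j : nat) := (j == (i + 1) %% n) || (i == (j + 1) %% n).

Lemma cyc_walksE n len (x y : 'I_n) : cyc_walks len x y = walks (@cyc_adj n) len x y.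
Proof. by []. Qed.

Lemma cyc_walks_vec n len (x y : 'I_n) :
  cyc_walks len x y = nth 0 (walk_vec n (cyc_adjn n) y len) x.
Proof. exact: walks_vec. Qed.

Lemma t_walks_rec l : walks_rec (@cyc_adj 3) l.
Proof. by apply: (@walks_rec_checkP _ (cyc_adjn 3) _ _ _ (leq0n l)); vm_compute. Qed.

Lemma h_walks_rec l : walks_rec (@cyc_adj 6) l.
Proof. by apply: (@walks_rec_checkP _ (cyc_adjn 6) _ _ _ (leq0n l)); vm_compute. Qed.

(* A state x : 'I_27 encodes the triple (x / 9, x / 3 mod 3, x mod 3) of colours. *)
Definition comp0 (x : nat) := x %/ 9.
Definition comp1 (x : nat) := x %/ 3 %% 3.
Definition comp2 (x : nat) := x %% 3.

Definition third (a b : nat) := (6 - (a + b)) %% 3.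

Definition trans_adjn (x y : nat) : bool :=
  [&& comp0 x != comp0 y, comp1 x != comp1 y, comp2 x != comp2 y,
      third (comp0 x) (comp0 y) != third (comp1 x) (comp1 y),
      third (comp1 x) (comp1 y) != third (comp2 x) (comp2 y) &
      third (comp0 x) (comp0 y) != third (comp2 x) (comp2 y)].

Definition trans_adj (x y : 'I_27) := trans_adjn x y.

Definition rotate_staten (x : nat) := 9 * comp1 x + 3 * comp2 x + comp0 x.
Definition rotate_state (x : 'I_27) : 'I_27 := inord (rotate_staten x).

(* Walks of length k from x to its rotation, split along their first step x -> y;
   strand 0 starts with the colours 2, 1 fixed at u_1. *)
Definition twisted_walks k := \sum_(x : 'I_27) \sum_(y : 'I_27)
  ((comp0 x == 2) && (comp0 y == 1) && trans_adj x y) * walks trans_adj k.-1 y (rotate_state x).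

Definition twisted_walks_vec k :=
  sumn [seq let v := walk_vec 27 trans_adjn (rotate_staten x) k.-1 in
    sumn [seq ((comp0 x == 2) && (comp0 y == 1) && trans_adjn x y) * nth 0 v y
         | y <- iota 0 27] | x <- iota 0 27].

Lemma twisted_walks_vecE k : twisted_walks k = twisted_walks_vec k.
Proof.
rewrite /twisted_walks /twisted_walks_vec -sum_ord_sumn; apply: eq_bigr => x _.
rewrite -sum_ord_sumn; apply: eq_bigr => y _.
rewrite walks_vec /rotate_state inordK // /rotate_staten /comp0 /comp1 /comp2.
have := ltn_ord x; have := ltn_pmod (x %/ 3) (isT : 0 < 3); have := ltn_pmod x (isT : 0 < 3).
lia.
Qed.

Lemma trans_walks_rec l : 1 <= l -> walks_rec trans_adj l.
Proof. by move=> l_gt0; apply: (@walks_rec_checkP _ trans_adjn _ _ _ l_gt0); vm_compute. Qed.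

Lemma twisted_walks_rec k :
  twisted_walks (k + 6) + 4 * twisted_walks (k + 2) = 5 * twisted_walks (k + 4).
Proof.
rewrite /twisted_walks !big_distrr -big_split; apply: eq_bigr => x _ /=.
rewrite !big_distrr -big_split; apply: eq_bigr => y _ /=.
rewrite (mulnCA 4) (mulnCA 5) -mulnDr.
have -> : (k + 6).-1 = k.+1 + 4 by lia.
have -> : (k + 4).-1 = k.+1 + 2 by lia.
by rewrite addn2 trans_walks_rec.
Qed.

Lemma t_h_walks_rec k :
  t_walks (k + 6) 1 + 3 * h_walks (k + 6) 2 + 4 * (t_walks (k + 2) 1 + 3 * h_walks (k + 2) 2)
  = 5 * (t_walks (k + 4) 1 + 3 * h_walks (k + 4) 2).
Proof.
have := t_walks_rec (k + 2) (inord 0) (inord 1).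
have := h_walks_rec (k + 2) (inord 0) (inord 2).
have -> : k + 2 + 4 = k + 6 by rewrite -addnA.
have -> : k + 2 + 2 = k + 4 by rewrite -addnA.
by rewrite /t_walks /h_walks !cyc_walksE; lia.
Qed.

Lemma twisted_walks_small :
  all (fun k => twisted_walks_vec k ==
     nth 0 (walk_vec 3 (cyc_adjn 3) 1 k) 0 + 3 * nth 0 (walk_vec 6 (cyc_adjn 6) 2 k) 0)
    (iota 1 6).
Proof. by vm_compute. Qed.

Lemma twisted_walksE k : 1 <= k -> twisted_walks k = t_walks k 1 + 3 * h_walks k 2.
Proof.
elim/ltn_ind: k => k IH k_gt0; case: (ltnP k 7) => k_small.
  rewrite twisted_walks_vecE /t_walks /h_walks !cyc_walks_vec !inordK //; apply/eqP.
  by apply: (allP twisted_walks_small); rewrite mem_iota; lia.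
have [j kE] : exists j, k = j + 6 by exists (k - 6); lia.
subst k.
have IH2 : twisted_walks (j + 2) = t_walks (j + 2) 1 + 3 * h_walks (j + 2) 2 by apply: IH; lia.
have IH4 : twisted_walks (j + 4) = t_walks (j + 4) 1 + 3 * h_walks (j + 4) 2 by apply: IH; lia.
have := twisted_walks_rec j; have := t_h_walks_rec j; lia.
Qed.

(** * One-factorisations as normalised edge colourings *)

Section OneFactorisations.
Variables (V : finType) (E : {set {set V}}) (x0 : V) (a : 'I_3 -> {set V}).
Hypotheses (a_in_E : forall i, a i \in E) (x0_in_a : forall i, x0 \in a i)
  (a_inj : injective a) (edges_at_x0 : forall e, e \in E -> x0 \in e -> exists i, e = a i).

Definition is_perfect_matching (M : {set {set V}}) :=
  (M \subset E) && [forall v : V, #|[set e in M | v \in e]| == 1].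

Definition is_one_factorisation (F : {set {set {set V}}}) :=
  partition F E && [forall M in F, is_perfect_matching M].

(* Proper 3-edge-colourings normalised at x0; the value off E is irrelevant
   and fixed to 0 so that colourings are determined by their colour classes. *)
Definition normal_colourings : {set {ffun {set V} -> 'I_3}} :=
  [set c : {ffun {set V} -> 'I_3} | [&& [forall e, (e \notin E) ==> (c e == ord0)],
     [forall i, c (a i) == i] &
     [forall v, forall i, #|[set e in E | (v \in e) && (c e == i)]| == 1]]].

Definition colour_class (c : {ffun {set V} -> 'I_3}) i := [set e in E | c e == i].

Definition colour_classes c : {set {set {set V}}} := [set colour_class c i | i : 'I_3].

Lemma colour_class_at c v i :
  [set e in colour_class c i | v \in e] = [set e in E | (v \in e) && (c e == i)].
Proof. by apply/setP => e; rewrite !inE -andbA (andbC (c e == i)). Qed.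

Lemma colour_classes_one_factorisation c :
  c \in normal_colourings -> is_one_factorisation (colour_classes c).
Proof.
rewrite inE => /and3P[_ /forallP c_a /forallP c_proper].
apply/andP; split.
  apply/and3P; split.
  - apply/eqP/setP => e; apply/bigcupP/idP => [[B /imsetP[i _ ->]]|eE].
      by rewrite inE => /andP[].
    by exists (colour_class c (c e)); [exact: imset_f | rewrite inE eE /=].
  - apply/trivIsetP => A B /imsetP[i _ ->] /imsetP[j _ ->] nij.
    apply/pred0P => e /=; rewrite !inE.
    apply/negP => /andP[/andP[_ /eqP ei] /andP[_ /eqP ej]].
    by move: nij; rewrite -ei -ej eqxx.
  - apply/imsetP => [[i _]] /setP /(_ (a i)).
    by rewrite !inE a_in_E c_a.
apply/forallP => M; apply/implyP => /imsetP[i _ ->]; apply/andP; split.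
  by apply/subsetP => e; rewrite inE => /andP[].
by apply/forallP => v; rewrite colour_class_at; apply: (forallP (c_proper v)).
Qed.

Lemma colour_classes_inj : {in normal_colourings &, injective colour_classes}.
Proof.
move=> c c'; rewrite !inE => /and3P[/forallP c_off /forallP c_a _].
move=> /and3P[/forallP c'_off /forallP c'_a _] eq_cl.
apply/ffunP => e; case: (boolP (e \in E)) => eE; last first.
  by rewrite (eqP (implyP (c_off e) eE)) (eqP (implyP (c'_off e) eE)).
have : colour_class c (c e) \in colour_classes c' by rewrite -eq_cl; exact: imset_f.
case/imsetP => j _ cl_e.
have : a (c e) \in colour_class c' j by rewrite -cl_e inE a_in_E c_a.
rewrite inE (eqP (c'_a _)) => /andP[_ /eqP ->].
have : e \in colour_class c' j by rewrite -cl_e inE eE eqxx.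
by rewrite inE => /andP[_ /eqP].
Qed.

Section ColouringOfFactorisation.
Variable F : {set {set {set V}}}.
Hypothesis F_one_fact : is_one_factorisation F.

Let F_partition : partition F E. Proof. by case/andP: F_one_fact. Qed.
Let F_matchings M : M \in F -> is_perfect_matching M.
Proof. by case/andP: F_one_fact => _ /forallP H MF; exact: implyP (H M) MF. Qed.
Let cover_F : cover F = E. Proof. by case/and3P: F_partition => /eqP. Qed.
Let trivI_F : trivIset F. Proof. by case/and3P: F_partition. Qed.

Lemma pblock_in_F e : e \in E -> pblock F e \in F.
Proof. by move=> eE; apply: pblock_mem; rewrite cover_F. Qed.

Lemma mem_pblock_E e : e \in E -> e \in pblock F e.
Proof. by move=> eE; rewrite mem_pblock cover_F. Qed.

Lemma pblock_a_inj : injective (fun i => pblock F (a i)).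
Proof.
move=> i j eij; apply: a_inj.
have /andP[_ /forallP /(_ x0) /cards1P[e He]] := F_matchings (pblock_in_F (a_in_E i)).
have mem_e (f : {set V}) : f \in pblock F (a i) -> x0 \in f -> f = e.
  by move=> fi xf; apply/set1P; rewrite -He inE fi.
rewrite (mem_e (a i)) ?mem_pblock_E // (mem_e (a j)) // eij.
exact: mem_pblock_E.
Qed.

Lemma pblock_aP B : B \in F -> exists i, B = pblock F (a i).
Proof.
move=> BF; have /andP[sBE /forallP /(_ x0) /cards1P[e He]] := F_matchings BF.
have : e \in [set e in B | x0 \in e] by rewrite He inE.
rewrite inE => /andP[eB xe].
have [i ei] := edges_at_x0 (subsetP sBE e eB) xe; exists i.
by rewrite -ei (def_pblock trivI_F BF eB).
Qed.

Definition factorisation_colouring : {ffun {set V} -> 'I_3} :=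
  [ffun e => if e \in E then odflt ord0 [pick i | pblock F e == pblock F (a i)] else ord0].

Lemma factorisation_colouringE e i :
  e \in E -> (factorisation_colouring e == i) = (pblock F e == pblock F (a i)).
Proof.
move=> eE; have [j ej] := pblock_aP (pblock_in_F eE).
rewrite ffunE eE ej (inj_eq pblock_a_inj).
case: pickP => [j' /eqP/pblock_a_inj -> //|/(_ j)]; by rewrite eqxx.
Qed.

Lemma colour_class_factorisation i :
  colour_class factorisation_colouring i = pblock F (a i).
Proof.
apply/setP => e; rewrite inE.
case: (boolP (e \in E)) => eE /=.
  rewrite factorisation_colouringE //; apply/eqP/idP => [<-|ein]; first exact: mem_pblock_E.
  exact: def_pblock (pblock_in_F (a_in_E i)) ein.
apply/esym/negP => ein; move/negP: eE; apply.
by rewrite -cover_F; apply/bigcupP; exists (pblock F (a i)); first exact: pblock_in_F.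
Qed.

Lemma factorisation_colouring_normal : factorisation_colouring \in normal_colourings.
Proof.
rewrite inE; apply/and3P; split.
- by apply/forallP => e; apply/implyP => eE; rewrite ffunE (negbTE eE).
- by apply/forallP => i; rewrite factorisation_colouringE.
apply/forallP => v; apply/forallP => i; rewrite -colour_class_at.
have /andP[_ /forallP] := F_matchings (pblock_in_F (a_in_E i)).
by rewrite -colour_class_factorisation.
Qed.

Lemma colour_classes_factorisation : colour_classes factorisation_colouring = F.
Proof.
apply/setP => B; apply/imsetP/idP => [[i _ ->]|BF].
  by rewrite colour_class_factorisation; exact: pblock_in_F.
by have [i ->] := pblock_aP BF; exists i => //; rewrite colour_class_factorisation.
Qed.

End ColouringOfFactorisation.

Theorem card_one_factorisations :
  #|[set F | is_one_factorisation F]| = #|normal_colourings|.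
Proof.
rewrite -(card_in_imset colour_classes_inj); apply: eq_card => F; rewrite inE.
apply/idP/imsetP => [F1|[c cC ->]]; last exact: colour_classes_one_factorisation.
exists (factorisation_colouring F); first exact: factorisation_colouring_normal.
by rewrite colour_classes_factorisation.
Qed.

End OneFactorisations.

(** * Edge colourings of GP(3k,k) *)

Lemma in_set3 (T : finType) (x a b c : T) :
  (x \in [set a; b; c]) = [|| x == a, x == b | x == c].
Proof. by rewrite !inE; case: (x == a); case: (x == b). Qed.

Lemma card_set3_pred (T : finType) (x y z : T) (P : pred T) :
  [&& x != y, y != z & x != z] -> #|[set e in [set x; y; z] | P e]| = P x + P y + P z.
Proof.
case/and3P => xy yz xz; rewrite -sum1_card.
rewrite (eq_bigl (fun e => (e \in [set x; y; z]) && P e)); last by move=> e; rewrite inE.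
rewrite big_mkcondr /= -setUA big_setU1 /=; last by rewrite !inE negb_or xy xz.
rewrite big_setU1 /=; last by rewrite !inE yz.
by rewrite big_set1 addnA; case: (P x); case: (P y); case: (P z).
Qed.

Definition ord3_0 : 'I_3 := @Ordinal 3 0 isT.
Definition ord3_1 : 'I_3 := @Ordinal 3 1 isT.
Definition ord3_2 : 'I_3 := @Ordinal 3 2 isT.

Lemma ord3_cases (t : 'I_3) : [\/ t = ord3_0, t = ord3_1 | t = ord3_2].
Proof.
case: t => [[|[|[|]]]] //= p; [constructor 1|constructor 2|constructor 3]; exact: val_inj.
Qed.

Definition dist3 (x y z : 'I_3) := [&& x != y, y != z & x != z].

Lemma dist3E (x y z : 'I_3) :
  [forall i, (x == i) + (y == i) + (z == i) == 1] = dist3 x y z.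
Proof.
apply/forallP/idP => [H|d i].
  move: (H ord3_0) (H ord3_1) (H ord3_2).
  by case: (ord3_cases x) => ->; case: (ord3_cases y) => ->; case: (ord3_cases z) => ->.
move: d; case: (ord3_cases i) => ->;
by case: (ord3_cases x) => ->; case: (ord3_cases y) => ->; case: (ord3_cases z) => ->.
Qed.

Definition third3 (a b : 'I_3) : 'I_3 := Ordinal (ltn_pmod (6 - (a + b)) (isT : 0 < 3)).

Lemma dist3_third a b : a != b -> dist3 a b (third3 a b).
Proof. by case: (ord3_cases a) => ->; case: (ord3_cases b) => ->. Qed.

Lemma third3_uniq a b z : dist3 a b z -> z = third3 a b.
Proof.
move=> h; apply: val_inj; move: h.
by case: (ord3_cases a) => ->; case: (ord3_cases b) => ->; case: (ord3_cases z) => ->.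
Qed.

Lemma ord3_avoid2 (x y z t : 'I_3) :
  x != y -> z != x -> z != y -> t != x -> t != y -> z = t.
Proof.
by case: (ord3_cases x) => ->; case: (ord3_cases y) => ->; case: (ord3_cases z) => ->;
   case: (ord3_cases t) => ->.
Qed.

Section GeneralisedPetersen.
Variable k : nat.
Hypothesis k_gt0 : 0 < k.
Local Notation n := (3 * k).
Local Notation V := (gp_vertex k).
Local Notation E := (gp_edges k).

Lemma n_gt0 : 0 < n. Proof. lia. Qed.

Definition ord_mod (x : nat) : 'I_n := Ordinal (ltn_pmod x n_gt0).
Definition nextI (i : 'I_n) := ord_mod (i + 1).
Definition prevI (i : 'I_n) := ord_mod (i + n.-1).
Definition addkI (i : 'I_n) := ord_mod (i + k).
Definition subkI (i : 'I_n) := ord_mod (i + 2 * k).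

Lemma mod_lt_double x : x < 2 * n -> x %% n = if x < n then x else x - n.
Proof.
move=> x2; case: ifP => xn; first by rewrite modn_small.
by rewrite (_ : x = (x - n) + n) ?modnDr ?modn_small; lia.
Qed.

Ltac ord_mod_arith i :=
  pose proof (ltn_ord i); rewrite /= ?modnDml !mod_lt_double; try lia; repeat case: ifP; lia.

Lemma nextIK : cancel nextI prevI.
Proof. by move=> i; apply: val_inj; ord_mod_arith i. Qed.
Lemma prevIK : cancel prevI nextI.
Proof. by move=> i; apply: val_inj; ord_mod_arith i. Qed.
Lemma addkIK : cancel addkI subkI.
Proof. by move=> i; apply: val_inj; ord_mod_arith i. Qed.
Lemma subkIK : cancel subkI addkI.
Proof. by move=> i; apply: val_inj; ord_mod_arith i. Qed.
Lemma addkI2 i : addkI (addkI i) = subkI i.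
Proof. by apply: val_inj; rewrite /= modnDml -addnA addnn -mul2n. Qed.
Lemma subkI2 i : subkI (subkI i) = addkI i.
Proof.
apply: val_inj; rewrite /= modnDml.
by rewrite (_ : i + 2 * k + 2 * k = (i + k) + n) ?modnDr; lia.
Qed.

Lemma nextI_eqF i : (nextI i == i) = false.
Proof. by apply/negbTE/eqP => /(congr1 val); ord_mod_arith i. Qed.
Lemma prevI_eqF i : (prevI i == i) = false.
Proof. by apply/negbTE/eqP => /(congr1 val); ord_mod_arith i. Qed.
Lemma prevI_nextI_eqF i : (prevI i == nextI i) = false.
Proof. by apply/negbTE/eqP => /(congr1 val); ord_mod_arith i. Qed.
Lemma addkI_eqF i : (addkI i == i) = false.
Proof. by apply/negbTE/eqP => /(congr1 val); ord_mod_arith i. Qed.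
Lemma subkI_eqF i : (subkI i == i) = false.
Proof. by apply/negbTE/eqP => /(congr1 val); ord_mod_arith i. Qed.
Lemma addkI_subkI_eqF i : (addkI i == subkI i) = false.
Proof. by apply/negbTE/eqP => /(congr1 val); ord_mod_arith i. Qed.

Lemma eq_nextIF i : (i == nextI i) = false. Proof. by rewrite eq_sym nextI_eqF. Qed.
Lemma eq_prevIF i : (i == prevI i) = false. Proof. by rewrite eq_sym prevI_eqF. Qed.
Lemma nextI_prevI_eqF i : (nextI i == prevI i) = false.
Proof. by rewrite eq_sym prevI_nextI_eqF. Qed.
Lemma eq_addkIF i : (i == addkI i) = false. Proof. by rewrite eq_sym addkI_eqF. Qed.
Lemma eq_subkIF i : (i == subkI i) = false. Proof. by rewrite eq_sym subkI_eqF. Qed.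
Lemma subkI_addkI_eqF i : (subkI i == addkI i) = false.
Proof. by rewrite eq_sym addkI_subkI_eqF. Qed.

Lemma eq_nextI i j : (i == nextI j) = (prevI i == j).
Proof. by apply/eqP/eqP => [->|<-]; rewrite ?nextIK ?prevIK. Qed.
Lemma eq_addkI i j : (i == addkI j) = (subkI i == j).
Proof. by apply/eqP/eqP => [->|<-]; rewrite ?addkIK ?subkIK. Qed.

Lemma gp_adj_uu i j : @gp_adj k (false, i) (false, j) = (j == nextI i) || (j == prevI i).
Proof.
change ((j == nextI i) || (i == nextI j) = (j == nextI i) || (j == prevI i)).
by rewrite (eq_nextI i j) (eq_sym (prevI i)).
Qed.
Lemma gp_adj_vv i j : @gp_adj k (true, i) (true, j) = (j == addkI i) || (j == subkI i).
Proof.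
change ((j == addkI i) || (i == addkI j) = (j == addkI i) || (j == subkI i)).
by rewrite (eq_addkI i j) (eq_sym (subkI i)).
Qed.
Lemma gp_adj_uv i j : @gp_adj k (false, i) (true, j) = (i == j). Proof. by []. Qed.
Lemma gp_adj_vu i j : @gp_adj k (true, i) (false, j) = (i == j). Proof. by []. Qed.

(* Edge labels: (0, i) is the rim edge u_i u_(i+1), (1, i) the spoke u_i v_i and
   (2, i) the inner edge v_i v_(i+k); inc1 w, inc2 w, inc3 w label the three
   edges at w. *)
Definition edge_of (d : 'I_3 * 'I_n) : {set V} :=
  if d.1 == ord3_0 then [set (false, d.2); (false, nextI d.2)]
  else if d.1 == ord3_1 then [set (false, d.2); (true, d.2)]
  else [set (true, d.2); (true, addkI d.2)].

Definition inc1 (w : V) := if w.1 then (ord3_1, w.2) else (ord3_0, prevI w.2).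
Definition inc2 (w : V) := if w.1 then (ord3_2, w.2) else (ord3_0, w.2).
Definition inc3 (w : V) := if w.1 then (ord3_2, subkI w.2) else (ord3_1, w.2).

Ltac gp_simp := rewrite ?nextIK ?prevIK ?addkIK ?subkIK ?addkI2 ?subkI2 ?eqxx
  ?nextI_eqF ?eq_nextIF ?prevI_eqF ?eq_prevIF ?prevI_nextI_eqF ?nextI_prevI_eqF
  ?addkI_eqF ?eq_addkIF ?subkI_eqF ?eq_subkIF ?addkI_subkI_eqF ?subkI_addkI_eqF /=.

Lemma mem_edge_of w d : (w \in edge_of d) = [|| d == inc1 w, d == inc2 w | d == inc3 w].
Proof.
case: w d => [b i] [t j]; rewrite /edge_of /inc1 /inc2 /inc3 /=.
case: (ord3_cases t) => ->; case: b; rewrite !inE !xpair_eqE /= ?eqxx //=.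
all: apply/idP/idP; repeat case/orP; repeat move/eqP=> ?; subst; gp_simp; rewrite ?orbT //.
Qed.

Lemma edge_of_in d : edge_of d \in E.
Proof.
case: d => [t j]; rewrite inE /edge_of /=; case: (ord3_cases t) => -> /=.
- apply/existsP; exists (false, j); apply/existsP; exists (false, nextI j).
  by rewrite eqxx gp_adj_uu eqxx.
- apply/existsP; exists (false, j); apply/existsP; exists (true, j).
  by rewrite eqxx gp_adj_uv eqxx.
- apply/existsP; exists (true, j); apply/existsP; exists (true, addkI j).
  by rewrite eqxx gp_adj_vv eqxx.
Qed.

Lemma edge_ofP e : e \in E -> exists d, e = edge_of d.
Proof.
rewrite inE => /existsP[[b i] /existsP[[b' j] /andP[/eqP -> adj]]].
case: b b' adj => [] [].
- rewrite gp_adj_vv => /orP[]/eqP ->; first by exists (ord3_2, i).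
  by exists (ord3_2, subkI i); rewrite /edge_of /= subkIK setUC.
- by rewrite gp_adj_vu => /eqP ->; exists (ord3_1, j); rewrite /edge_of /= setUC.
- by rewrite gp_adj_uv => /eqP ->; exists (ord3_1, j).
- rewrite gp_adj_uu => /orP[]/eqP ->; first by exists (ord3_0, i).
  by exists (ord3_0, prevI i); rewrite /edge_of /= prevIK setUC.
Qed.

Lemma edge_of_inj : injective edge_of.
Proof.
move=> d1 [t j] e.
have m w : (w \in edge_of d1) = (w \in edge_of (t, j)) by rewrite e.
case: (ord3_cases t) => et; subst t;
 [have := m (false, j); have := m (false, nextI j) | have := m (false, j); have := m (true, j)
 | have := m (true, j); have := m (true, addkI j)];
  rewrite !mem_edge_of /inc1 /inc2 /inc3 /= !xpair_eqE /=; gp_simp; rewrite ?orbT /=;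
  case: d1 {e m} => t' j' /=; rewrite !xpair_eqE /=; case: (ord3_cases t') => -> /=;
    rewrite ?andbF ?orbF //=;
  do 4 (gp_simp; try case/orP; try move/eqP->); by gp_simp.
Qed.

Lemma inc_uniq w : [&& inc1 w != inc2 w, inc2 w != inc3 w & inc1 w != inc3 w].
Proof. by case: w => [[] i]; rewrite /inc1 /inc2 /inc3 /= !xpair_eqE /=; gp_simp. Qed.

Lemma edges_at w :
  [set e in E | w \in e] = [set edge_of (inc1 w); edge_of (inc2 w); edge_of (inc3 w)].
Proof.
apply/setP => e; rewrite {1}in_set in_set3; apply/andP/idP => [[eE we]|].
  have [d e_d] := edge_ofP eE; subst e; move: we; rewrite mem_edge_of.
  by case/or3P => /eqP ->; rewrite eqxx ?orbT.
by case/or3P => /eqP ->; rewrite edge_of_in mem_edge_of eqxx ?orbT.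
Qed.

Lemma card_edges_at w (P : pred {set V}) :
  #|[set e in E | (w \in e) && P e]| =
  P (edge_of (inc1 w)) + P (edge_of (inc2 w)) + P (edge_of (inc3 w)).
Proof.
rewrite -card_set3_pred; first by apply: eq_card => e; rewrite -edges_at !in_set andbA.
by case/and3P: (inc_uniq w) => h1 h2 h3; rewrite !(inj_eq edge_of_inj) h1 h2 h3.
Qed.

Lemma proper_colouringE (c : {ffun {set V} -> 'I_3}) :
  [forall v, forall i, #|[set e in E | (v \in e) && (c e == i)]| == 1] =
  [forall w, dist3 (c (edge_of (inc1 w))) (c (edge_of (inc2 w))) (c (edge_of (inc3 w)))].
Proof.
apply: eq_forallb => w; rewrite -dist3E; apply: eq_forallb => i.
by rewrite (card_edges_at w (fun e => c e == i)).
Qed.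

Definition pos0 : 'I_n := ord_mod 0.
Definition pos1 : 'I_n := nextI pos0.
Definition u1 : V := (false, pos1).

Definition edge_at_u1 (t : 'I_3) : {set V} :=
  if t == ord3_0 then edge_of (ord3_1, pos1)
  else if t == ord3_1 then edge_of (ord3_0, pos1) else edge_of (ord3_0, pos0).

Lemma edge_at_u1_in t : edge_at_u1 t \in E.
Proof. by rewrite /edge_at_u1; case: ifP => _; [|case: ifP => _]; apply: edge_of_in. Qed.

Lemma u1_in_edge_at_u1 t : u1 \in edge_at_u1 t.
Proof.
rewrite /edge_at_u1 /u1; case: (ord3_cases t) => -> /=;
  rewrite mem_edge_of /inc1 /inc2 /inc3 /= !xpair_eqE ?eqxx ?orbT //.
by rewrite /pos1 nextIK eqxx.
Qed.

Lemma edge_at_u1_inj : injective edge_at_u1.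
Proof.
move=> t t'; rewrite /edge_at_u1.
case: (ord3_cases t) => ->; case: (ord3_cases t') => -> //= /edge_of_inj /eqP;
by rewrite !xpair_eqE /= /pos1 ?nextI_eqF ?eq_nextIF.
Qed.

Lemma edge_at_u1P e : e \in E -> u1 \in e -> exists t, e = edge_at_u1 t.
Proof.
move=> /edge_ofP[d ->]; rewrite mem_edge_of /inc1 /inc2 /inc3 /u1 /= => /or3P[] /eqP ->.
- by exists ord3_2; rewrite /edge_at_u1 /= /pos1 nextIK.
- by exists ord3_1.
- by exists ord3_0.
Qed.

Definition gp_colourings := normal_colourings E edge_at_u1.

Lemma card_gp_one_factorisations :
  #|[set F | is_one_factorisation E F]| = #|gp_colourings|.
Proof.
exact: card_one_factorisations edge_at_u1_in u1_in_edge_at_u1 edge_at_u1_inj edge_at_u1P.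
Qed.

Section RimColouring.
Variable o : {ffun 'I_n -> 'I_3}.

Definition spoke_col i := third3 (o (prevI i)) (o i).

Definition label_col (d : 'I_3 * 'I_n) :=
  if d.1 == ord3_0 then o d.2 else if d.1 == ord3_1 then spoke_col d.2 else spoke_col (subkI d.2).

Definition rim_colouring : {ffun {set V} -> 'I_3} :=
  [ffun e => if [pick d | edge_of d == e] is Some d then label_col d else ord3_0].

Definition valid_rim :=
  [&& o pos0 == ord3_2, o pos1 == ord3_1, [forall i, o (prevI i) != o i] &
      [forall i, dist3 (spoke_col i) (spoke_col (subkI i)) (spoke_col (addkI i))]].

Lemma rim_colouring_edge d : rim_colouring (edge_of d) = label_col d.
Proof. by rewrite ffunE; case: pickP => [d' /eqP /edge_of_inj -> //|/(_ d)]; rewrite eqxx. Qed.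

Lemma rim_colouring_notin e : e \notin E -> rim_colouring e = ord3_0.
Proof.
move=> eE; rewrite ffunE; case: pickP => [d' /eqP ed'|//].
by move: eE; rewrite -ed' edge_of_in.
Qed.

Lemma rim_colouring_gp : valid_rim -> rim_colouring \in gp_colourings.
Proof.
case/and4P => /eqP o_pos0 /eqP o_pos1 /forallP o_rim /forallP o_spokes.
rewrite inE; apply/and3P; split.
- by apply/forallP => e; apply/implyP => eE; rewrite rim_colouring_notin.
- apply/forallP => t; rewrite /edge_at_u1.
  case: (ord3_cases t) => -> /=; rewrite rim_colouring_edge /label_col /=.
  + by rewrite /spoke_col /pos1 nextIK o_pos0 o_pos1.
  + by rewrite o_pos1.
  + by rewrite o_pos0.
rewrite proper_colouringE; apply/forallP => [[[] i]].
  by rewrite /inc1 /inc2 /inc3 /= !rim_colouring_edge /label_col /= subkI2; apply: o_spokes.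
by rewrite /inc1 /inc2 /inc3 /= !rim_colouring_edge /label_col /=; apply: dist3_third.
Qed.

End RimColouring.

Definition rim_of (c : {ffun {set V} -> 'I_3}) : {ffun 'I_n -> 'I_3} :=
  [ffun i => c (edge_of (ord3_0, i))].

Lemma rim_of_colouring o : rim_of (rim_colouring o) = o.
Proof. by apply/ffunP => i; rewrite ffunE rim_colouring_edge. Qed.

Section RimOfColouring.
Variable c : {ffun {set V} -> 'I_3}.
Hypothesis c_gp : c \in gp_colourings.

Let c_off e : e \notin E -> c e = ord3_0.
Proof.
by move: c_gp; rewrite inE => /and3P[/forallP h _ _] eE; apply/eqP; apply: (implyP (h e)).
Qed.
Let c_edge_at_u1 t : c (edge_at_u1 t) = t.
Proof. by move: c_gp; rewrite inE => /and3P[_ /forallP h _]; apply/eqP. Qed.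
Let c_proper w : dist3 (c (edge_of (inc1 w))) (c (edge_of (inc2 w))) (c (edge_of (inc3 w))).
Proof. by move: c_gp; rewrite inE => /and3P[_ _]; rewrite proper_colouringE => /forallP. Qed.

Lemma spoke_colE j : c (edge_of (ord3_1, j)) = spoke_col (rim_of c) j.
Proof. by rewrite /spoke_col !ffunE; apply: third3_uniq; exact: (c_proper (false, j)). Qed.

Lemma inner_colE j : c (edge_of (ord3_2, j)) = c (edge_of (ord3_1, subkI j)).
Proof.
have := c_proper (true, subkI j); have := c_proper (true, addkI j); have := c_proper (true, j).
rewrite /inc1 /inc2 /inc3 /= subkI2 addkIK.
case/and3P => _ ne_j _; case/and3P => _ ne_addk _; case/and3P => ne_sp ne_subk ne_sp'.
by apply: (ord3_avoid2 ne_subk); rewrite // eq_sym.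
Qed.

Lemma rim_ofK : rim_colouring (rim_of c) = c.
Proof.
apply/ffunP => e; case: (boolP (e \in E)) => eE; last by rewrite rim_colouring_notin // c_off.
have [[t j] ->] := edge_ofP eE; rewrite rim_colouring_edge /label_col /=.
case: (ord3_cases t) => -> /=.
- by rewrite ffunE.
- by rewrite spoke_colE.
- by rewrite inner_colE spoke_colE.
Qed.

Lemma valid_rim_of : valid_rim (rim_of c).
Proof.
apply/and4P; split.
- by rewrite ffunE -(c_edge_at_u1 ord3_2).
- by rewrite ffunE -(c_edge_at_u1 ord3_1).
- apply/forallP => i; rewrite !ffunE; have := c_proper (false, i).
  by rewrite /inc1 /inc2 /inc3 /= => /and3P[].
apply/forallP => i; rewrite -!spoke_colE -inner_colE.
have := c_proper (true, i); rewrite /inc1 /inc2 /inc3 /=.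
by rewrite (inner_colE (subkI i)) subkI2.
Qed.

End RimOfColouring.

Lemma card_gp_colourings : #|gp_colourings| = #|[set o | valid_rim o]|.
Proof.
have inj : {in gp_colourings &, injective rim_of}.
  by move=> c c' c_gp c'_gp e; rewrite -(rim_ofK c_gp) -(rim_ofK c'_gp) e.
rewrite -(card_in_imset inj); apply: eq_card => o; rewrite inE.
apply/imsetP/idP => [[c c_gp ->]|o_valid]; first exact: valid_rim_of.
by exists (rim_colouring o); [exact: rim_colouring_gp | rewrite rim_of_colouring].
Qed.

End GeneralisedPetersen.

(** * Rim colourings as twisted walks *)

Definition state (a b c : nat) : 'I_27 := inord (9 * a + 3 * b + c).

Lemma state_val (a b c : 'I_3) : (state a b c : nat) = 9 * a + 3 * b + c.
Proof. by move: (ltn_ord a) (ltn_ord b) (ltn_ord c) => ha hb hc; rewrite /state inordK; lia. Qed.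

Lemma comp0_state (a b c : 'I_3) : comp0 (state a b c) = a.
Proof. by rewrite state_val /comp0; move: (ltn_ord a) (ltn_ord b) (ltn_ord c); lia. Qed.
Lemma comp1_state (a b c : 'I_3) : comp1 (state a b c) = b.
Proof. by rewrite state_val /comp1; move: (ltn_ord a) (ltn_ord b) (ltn_ord c); lia. Qed.
Lemma comp2_state (a b c : 'I_3) : comp2 (state a b c) = c.
Proof. by rewrite state_val /comp2; move: (ltn_ord a) (ltn_ord b) (ltn_ord c); lia. Qed.

Lemma state_comp (x : 'I_27) : state (comp0 x) (comp1 x) (comp2 x) = x.
Proof.
by apply: val_inj; rewrite /= /state /comp0 /comp1 /comp2 inordK; have := ltn_ord x; lia.
Qed.

Definition comp_at (x : nat) (m : nat) :=
  if m == 0 then comp0 x else if m == 1 then comp1 x else comp2 x.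

Lemma comp_at_lt (x : 'I_27) m : comp_at x m < 3.
Proof.
by rewrite /comp_at /comp0 /comp1 /comp2; have := ltn_ord x; case: ifP => _; [|case: ifP]; lia.
Qed.

Lemma divmod_small k (j m : nat) : j < k -> (m * k + j) %/ k = m /\ (m * k + j) %% k = j.
Proof. by move=> jk; rewrite divnMDl ?divn_small ?addn0 ?modnMDl ?modn_small //; lia. Qed.

Section RimWalks.
Variable k' : nat.
Local Notation k := k'.+1.
Let k_gt0 : 0 < k := ltn0Sn k'.
Local Notation n := (3 * k).
Local Notation ord_mod := (ord_mod k_gt0).
Local Notation prevI := (prevI k_gt0).
Local Notation addkI := (addkI k_gt0).
Local Notation subkI := (subkI k_gt0).
Local Notation spoke_col := (spoke_col k_gt0).

(* Position k of each strand is position 0 of the next one, whence the walk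
   ends at the rotation of its first state. *)
Definition walk_of_rim (o : {ffun 'I_n -> 'I_3}) : {ffun 'I_k.+1 -> 'I_27} :=
  [ffun j : 'I_k.+1 => state (o (ord_mod j)) (o (ord_mod (j + k))) (o (ord_mod (j + 2 * k)))].

Definition rim_of_walk (w : {ffun 'I_k.+1 -> 'I_27}) : {ffun 'I_n -> 'I_3} :=
  [ffun i : 'I_n => Ordinal (comp_at_lt (w (inord (i %% k))) (i %/ k))].

Lemma walk_of_rimK : cancel walk_of_rim rim_of_walk.
Proof.
move=> o; apply/ffunP => i; apply: val_inj; rewrite !ffunE /=.
have hi := ltn_ord i; have hm : i %% k < k by rewrite ltn_mod.
have hd : i %/ k < 3 by rewrite ltn_divLR.
have ei := divn_eq i k.
rewrite inordK; last lia.
move: (i %/ k) (i %% k) hm hd ei => q r hm hd ei.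
case: q hd ei => [|[|[|q]]] //= _ ei; rewrite /comp_at /= ?comp0_state ?comp1_state ?comp2_state;
  by congr (val (o _)); apply: val_inj; rewrite /= modn_small; lia.
Qed.

Lemma rim_of_walkK (w : {ffun 'I_k.+1 -> 'I_27}) :
  w ord_max = rotate_state (w ord0) -> walk_of_rim (rim_of_walk w) = w.
Proof.
move=> w_twisted; apply/ffunP => j; rewrite !ffunE /=.
have hj := ltn_ord j; case: (ltnP j k) => jk.
  rewrite !(@modn_small _ n); try lia.
  have := divmod_small 0 jk; rewrite mul0n add0n => -[-> ->].
  have := divmod_small 1 jk; rewrite mul1n addnC => -[-> ->].
  have := divmod_small 2 jk; rewrite addnC => -[-> ->] /=.
  have -> : inord j = j by apply: val_inj; rewrite /= inordK.
  exact: state_comp.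
have -> : j = ord_max by apply: val_inj => /=; lia.
rewrite /= w_twisted.
have -> : k %% n = k by rewrite modn_small; lia.
have -> : (k + k) %% n = 2 * k by rewrite modn_small; lia.
have -> : (k + 2 * k) %% n = 0 by rewrite (_ : k + 2 * k = n) ?modnn //; lia.
rewrite modnn mod0n div0n divnn k_gt0 modnMl mulnK // /comp_at /=.
by have -> : (inord 0 : 'I_k.+1) = ord0 by apply: val_inj; rewrite /= inordK.
Qed.

Definition strand_pos0 (t : nat) := ord_mod t.+1.
Definition strand_pos1 (t : nat) := ord_mod (t.+1 + k).
Definition strand_pos2 (t : nat) := ord_mod (t.+1 + 2 * k).

Lemma addkI_strand_pos0 (t : 'I_k) : addkI (strand_pos0 t) = strand_pos1 t.
Proof. by apply: val_inj; rewrite /= modnDml. Qed.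
Lemma subkI_strand_pos0 (t : 'I_k) : subkI (strand_pos0 t) = strand_pos2 t.
Proof. by apply: val_inj; rewrite /= modnDml. Qed.
Lemma prevI_strand_pos0 (t : 'I_k) : prevI (strand_pos0 t) = ord_mod t.
Proof. by apply: val_inj; rewrite /= modnDml (_ : t.+1 + n.-1 = t + n) ?modnDr //; lia. Qed.
Lemma prevI_strand_pos1 (t : 'I_k) : prevI (strand_pos1 t) = ord_mod (t + k).
Proof. by apply: val_inj; rewrite /= modnDml (_ : t.+1 + k + n.-1 = t + k + n) ?modnDr //; lia. Qed.
Lemma prevI_strand_pos2 (t : 'I_k) : prevI (strand_pos2 t) = ord_mod (t + 2 * k).
Proof.
by apply: val_inj; rewrite /= modnDml (_ : t.+1 + 2 * k + n.-1 = t + 2 * k + n) ?modnDr //; lia.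
Qed.

Lemma strand_posP (i : 'I_n) :
  exists t : 'I_k, [\/ i = strand_pos0 t, i = strand_pos1 t | i = strand_pos2 t].
Proof.
have hi := ltn_ord i; have hm : i %% k < k by rewrite ltn_mod.
have hd : i %/ k < 3 by rewrite ltn_divLR.
have ei := divn_eq i k.
move: (i %/ k) (i %% k) hm hd ei => q [|r] hm hd ei.
  exists ord_max; case: q hd ei => [|[|[|q]]] //= _ ei.
  - by constructor 3; apply: val_inj; rewrite /= (_ : k'.+1 + 2 * k = n) ?modnn; lia.
  - by constructor 1; apply: val_inj; rewrite /= modn_small; lia.
  - by constructor 2; apply: val_inj; rewrite /= modn_small; lia.
exists (Ordinal (ltnW hm)); case: q hd ei => [|[|[|q]]] //= _ ei.
- by constructor 1; apply: val_inj; rewrite /= modn_small; lia.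
- by constructor 2; apply: val_inj; rewrite /= modn_small; lia.
- by constructor 3; apply: val_inj; rewrite /= modn_small; lia.
Qed.

Definition rim_ok (o : {ffun 'I_n -> 'I_3}) i := o (prevI i) != o i.

Definition spokes_ok (o : {ffun 'I_n -> 'I_3}) i :=
  dist3 (spoke_col o i) (spoke_col o (subkI i)) (spoke_col o (addkI i)).

Lemma trans_adj_walk_of_rim o (t : 'I_k) :
  trans_adj (walk_of_rim o (widen_ord (leqnSn k) t)) (walk_of_rim o (lift ord0 t)) =
  [&& rim_ok o (strand_pos0 t), rim_ok o (strand_pos1 t), rim_ok o (strand_pos2 t) &
      dist3 (spoke_col o (strand_pos0 t)) (spoke_col o (strand_pos1 t))
            (spoke_col o (strand_pos2 t))].
Proof.
by rewrite /trans_adj /trans_adjn !ffunE !comp0_state !comp1_state !comp2_state /rim_ok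
  /spoke_col prevI_strand_pos0 prevI_strand_pos1 prevI_strand_pos2.
Qed.

Lemma spokes_ok_strand_pos o (t : 'I_k) :
  [&& spokes_ok o (strand_pos0 t), spokes_ok o (strand_pos1 t) & spokes_ok o (strand_pos2 t)] =
  dist3 (spoke_col o (strand_pos0 t)) (spoke_col o (strand_pos1 t)) (spoke_col o (strand_pos2 t)).
Proof.
rewrite /spokes_ok -addkI_strand_pos0 -subkI_strand_pos0 addkI2 addkIK subkI2 subkIK.
move: (spoke_col o _) (spoke_col o (addkI _)) (spoke_col o (subkI _)) => a b c.
by case: (ord3_cases a) => ->; case: (ord3_cases b) => ->; case: (ord3_cases c) => ->.
Qed.

Lemma walk_step_walk_of_rim o :
  walk_step trans_adj (walk_of_rim o) = [forall i, rim_ok o i] && [forall i, spokes_ok o i].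
Proof.
apply/forallP/andP => [step|[/forallP o_rim /forallP o_spokes] t].
  split; apply/forallP => i; have [t] := strand_posP i;
    have := step t; rewrite trans_adj_walk_of_rim -spokes_ok_strand_pos;
    by case/and4P=> ? ? ? /and3P[? ? ?] [] ->.
by rewrite trans_adj_walk_of_rim -spokes_ok_strand_pos !o_rim !o_spokes.
Qed.

Definition twisted_walkset : {set {ffun 'I_k.+1 -> 'I_27}} :=
  [set w | [&& walk_step trans_adj w, w ord_max == rotate_state (w ord0), comp0 (w ord0) == 2 &
               comp0 (w (lift ord0 ord0)) == 1]].

Lemma walk_of_rim_twisted o : walk_of_rim o ord_max = rotate_state (walk_of_rim o ord0).
Proof.
rewrite /rotate_state /rotate_staten !ffunE comp0_state comp1_state comp2_state /state /=.
have -> : ord_mod (k + 2 * k) = ord_mod 0.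
  by apply: val_inj; rewrite /= mod0n (_ : k + 2 * k = n) ?modnn; lia.
by rewrite addnn -mul2n.
Qed.

Lemma valid_rimE o : valid_rim k_gt0 o = (walk_of_rim o \in twisted_walkset).
Proof.
rewrite inE walk_of_rim_twisted walk_step_walk_of_rim eqxx /= !ffunE !comp0_state.
have -> : ord_mod (lift ord0 (@ord0 k')) = pos1 k_gt0 by apply: val_inj.
have -> : ord_mod (@ord0 k'.+1) = pos0 k_gt0 by apply: val_inj.
rewrite /valid_rim -[(_ : nat) == 2]/(_ == ord3_2) -[(_ : nat) == 1]/(_ == ord3_1).
by case: (_ == ord3_2); case: (_ == ord3_1); rewrite /= ?andbT ?andbF.
Qed.

Lemma card_valid_rims : #|[set o | valid_rim k_gt0 o]| = #|twisted_walkset|.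
Proof.
rewrite -(card_imset _ (can_inj walk_of_rimK)); apply: eq_card => w.
apply/imsetP/idP => [[o]|w_in]; first by rewrite inE valid_rimE => ? ->.
have w_twisted : w ord_max = rotate_state (w ord0) by move: w_in; rewrite inE => /and4P[_ /eqP].
by exists (rim_of_walk w); rewrite ?inE ?valid_rimE rim_of_walkK.
Qed.

Lemma card_twisted_walkset : #|twisted_walkset| = twisted_walks k.
Proof.
rewrite /twisted_walks -sum1_card.
rewrite (partition_big (fun w : {ffun 'I_k.+1 -> 'I_27} => (w ord0, w (lift ord0 ord0))) xpredT)
  //=.
rewrite [RHS]pair_big /=; apply: eq_bigr => [[x y]] _ /=.
case x2 : (comp0 x == 2); case y1 : (comp0 y == 1); rewrite /= ?andbF /=.
  rewrite -card_walkset_second -sum1_card; apply: eq_bigl => w; rewrite !inE.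
  apply/andP/andP => [[/and4P[st tw w0 w1] /eqP[e0 e1]]|[/and3P[/eqP e0 tw st] /eqP e1]].
    by split; [apply/and3P; split; rewrite // ?e0 -?e0 | rewrite e1].
  by split; [apply/and4P; split; rewrite // ?e0 ?e1 | rewrite e0 e1].
all: rewrite big_pred0 // => w; apply/negP; rewrite !inE.
all: move=> /andP[/and4P[_ _ w0 w1] /eqP[e0 e1]].
all: by move: x2 y1; rewrite -e0 -e1 w0 w1.
Qed.

End RimWalks.

Theorem lemma4 (k : nat) (hk : 1 <= k) :
  num_one_factorisations k = t_walks k 1 + 3 * h_walks k 2.
Proof.
case: k hk => [//|k] _.
rewrite /num_one_factorisations (card_gp_one_factorisations (ltn0Sn k)).
by rewrite card_gp_colourings card_valid_rims card_twisted_walkset twisted_walksE.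
Qed.
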